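(* Let $G$ be an additive group and let $(X,\rho)$ be the $\mathbb R$-tree described below. Then every point of $X$ is a point of valency $|G|+1$, i.e. for every $x\in X$ the set $X\setminus\{x\}$ has exactly $|G|+1$ connected components.
   Context: A function on an interval $(\alpha,\beta)$ is piecewise constant from the left if for every $x$ there is $\varepsilon>0$ with $f$ constant on $[x-\varepsilon,x]$. $X$ is the set of pairs $(f,a_f)$, $a_f>0$ real, $f:(a_f,+\infty)\to G$ piecewise constant from the left with $f|_{(b_f,+\infty)}\equiv0$ for some $b_f\ge a_f$. Order: $(f,a_f)\preceq(g,a_g)$ iff $a_f\le a_g$ and $f|_{(a_g,+\infty)}=g$; any two elements $p,q$ have a supremum $p\vee q$. Metric: $\rho((f,a_f),(g,a_g))=|a_f-a_g|$ if the pairs are comparable, and $\rho(p,q)=\rho(p,p\vee q)+\rho(p\vee q,q)$ otherwise. $|G|$ is the cardinality of $G$. *)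

From HB Require Import structures.
From mathcomp Require Import all_boot all_order all_algebra.
From mathcomp Require Import boolp reals.
From Stdlib Require Import ClassicalEpsilon.
Set Implicit Arguments. Unset Strict Implicit. Unset Printing Implicit Defensive.
Import Order.TTheory GRing.Theory Num.Theory.
Local Open Scope ring_scope.

Section Tree.
Variables (R : realType) (G : zmodType).

(* A pair (f, a_f).  The function f : (a_f,+oo) -> G is represented by a
   total function R -> G normalised to be 0 on (-oo, a_f]. *)
Record pt := Pt { pa : R ; pf : R -> G }.

Definition pw_const_left (a : R) (f : R -> G) : Prop :=
  forall x, a < x -> exists eps : R, 0 < eps /\ a < x - eps /\
    forall t, x - eps <= t <= x -> f t = f x.

Definition wf (p : pt) : Prop :=
  0 < pa p /\
  (forall t, t <= pa p -> pf p t = 0) /\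
  pw_const_left (pa p) (pf p) /\
  (exists b, pa p <= b /\ forall t, b < t -> pf p t = 0).

Definition X := {p : pt | wf p}.

Definition xa (p : X) : R := pa (proj1_sig p).
Definition xf (p : X) : R -> G := pf (proj1_sig p).

Definition preceq (p q : X) : Prop :=
  xa p <= xa q /\ forall t, xa q < t -> xf p t = xf q t.

Definition comparable (p q : X) : Prop := preceq p q \/ preceq q p.

Definition is_sup (p q s : X) : Prop :=
  preceq p s /\ preceq q s /\ forall u, preceq p u -> preceq q u -> preceq s u.

(* the supremum p \/ q (it exists for any two elements) *)
Definition join (p q : X) : X := epsilon (inhabits p) (is_sup p q).

Definition rho_cmp (p q : X) : R := `|xa p - xa q|.

Definition rho (p q : X) : R :=
  if `[< comparable p q >] then rho_cmp p q
  else rho_cmp p (join p q) + rho_cmp (join p q) q.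

Definition rho_open (U : X -> Prop) : Prop :=
  forall p, U p -> exists e : R, 0 < e /\ forall q, rho p q < e -> U q.

Definition rho_connected (A : X -> Prop) : Prop :=
  forall U V : X -> Prop, rho_open U -> rho_open V ->
    (forall p, A p -> U p \/ V p) ->
    (exists p, A p /\ U p) -> (exists p, A p /\ V p) ->
    exists p, A p /\ U p /\ V p.

Definition same_component_minus (x y z : X) : Prop :=
  exists A : X -> Prop, rho_connected A /\ (forall w, A w -> w <> x) /\ A y /\ A z.

End Tree.

(** For a point x, label every y <> x by [None] when y is not below x in the
    order, and by [Some (f_y(a_x))] when y lies below x: the value of f_y just
    left of a_x is the direction in which the segment from y reaches x.
    Each label class is open for rho, so a connected set avoiding x carries a
    single label.  Conversely two points with the same label are linked by
    their upward rays t |-> (f restricted to (t,+oo), t), which are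
    1-Lipschitz and merge before reaching x (below a_x by piecewise constancy
    from the left, or far above when neither point is below x).  Every label
    is taken, so the components are indexed by option G, a set of size |G|+1. *)

From Pilot Require Import Defs.
From HB Require Import structures.
From mathcomp Require Import all_boot all_order all_algebra.
From mathcomp Require Import boolp classical_sets reals.
From mathcomp Require Import lra.
From Stdlib Require Import ClassicalEpsilon.
Set Implicit Arguments. Unset Strict Implicit. Unset Printing Implicit Defensive.
Import Order.TTheory GRing.Theory Num.Theory.
Local Open Scope ring_scope.

Lemma exists_pos_le2 (R : realDomainType) (e d : R) :
  0 < e -> 0 < d -> exists2 c, 0 < c & c <= e /\ c <= d.
Proof.
move=> e0 d0; case: (lerP e d) => h; first by exists e.
by exists d => //; split => //; apply: ltW.
Qed.

Section RTree.
Variables (R : realType) (G : zmodType).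
Local Notation point := (X R G).
Implicit Types (p q u w x y z : point).

Lemma point_eq p q : xa p = xa q -> xf p =1 xf q -> p = q.
Proof.
case: p q => [[a f] hp] [[b g] hq]; rewrite /xa /xf /= => eab /funext efg.
by subst b g; congr exist; apply: Prop_irrelevance.
Qed.

Lemma xa_gt0 p : 0 < xa p.
Proof. by case: (proj2_sig p). Qed.

Lemma xf_below p t : t <= xa p -> xf p t = 0.
Proof. by case: (proj2_sig p) => _ [+ _]; apply. Qed.

Lemma xf_pw_const p : pw_const_left (xa p) (xf p).
Proof. by case: (proj2_sig p) => _ [_ []]. Qed.

Lemma xf_eventually0 p : exists b, xa p <= b /\ forall t, b < t -> xf p t = 0.
Proof. by case: (proj2_sig p) => _ [_ []]. Qed.

Lemma preceq_refl p : preceq p p.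
Proof. by split. Qed.

Lemma preceq_anti p q : preceq p q -> preceq q p -> p = q.
Proof.
move=> [le_pq eq_pq] [le_qp _]; have ea : xa p = xa q by apply/eqP; rewrite eq_le le_pq.
apply: point_eq => // t; case: (lerP t (xa q)) => ht; last exact: eq_pq.
by rewrite !xf_below ?ea.
Qed.

Lemma preceq_xa_lt p q : preceq p q -> p <> q -> xa p < xa q.
Proof.
move=> [le_pq eq_pq] neq; rewrite lt_neqAle le_pq andbT; apply/eqP => ea.
apply/neq/preceq_anti; first by split.
by split=> [|t]; rewrite ea // => /eq_pq ->.
Qed.

Lemma rho_comparable p q : Defs.comparable p q -> rho p q = `|xa p - xa q|.
Proof. by move=> h; rewrite /rho asboolT. Qed.

(** [ray p t] is (f_p restricted to (t,+oo), t), the point at height t of the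
    upward geodesic from p; for t < a_p it is p itself. *)
Definition ray_f p t s : G := if Num.max (xa p) t < s then xf p s else 0.

Lemma ray_wf p t : wf (Pt (Num.max (xa p) t) (ray_f p t)).
Proof.
set m := Num.max (xa p) t; have le_am : xa p <= m by rewrite le_max lexx.
have a0 := xa_gt0 p; split => /=; first lra.
split; first by move=> s; rewrite /ray_f -/m leNgt => /negbTE ->.
split.
  move=> s lt_ms; have [eps [eps0 [lt_eps pw]]] := xf_pw_const (le_lt_trans le_am lt_ms).
  have [c c0 [le_ce le_cd]] := @exists_pos_le2 _ eps ((s - m) / 2) eps0 (ltac:(lra)).
  exists c; split => //; split; first lra.
  move=> r /andP[r1 r2]; rewrite /ray_f -/m lt_ms ifT; last lra.
  by apply: pw; apply/andP; split; lra.
have [b [le_ab b0]] := xf_eventually0 p.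
exists (b + m); split => [|s lt_s]; first lra.
by rewrite /ray_f; case: ifP => // _; apply: b0; lra.
Qed.

Definition ray p t : point := exist _ _ (ray_wf p t).

Lemma ray_xa p t : xa p <= t -> xa (ray p t) = t.
Proof. exact: max_r. Qed.

Lemma xf_ray p t s : xa p <= t -> t < s -> xf (ray p t) s = xf p s.
Proof. by move=> le_at lt_ts; rewrite /xf /= /ray_f max_r // lt_ts. Qed.

Lemma ray_self p : ray p (xa p) = p.
Proof.
apply: point_eq => [|s]; first exact: ray_xa.
case: (lerP s (xa p)) => hs; last exact: xf_ray.
by rewrite !xf_below // ray_xa.
Qed.

Lemma preceq_ray p t : xa p <= t -> preceq p (ray p t).
Proof. by move=> le_at; split=> [|s]; rewrite ray_xa // => /(xf_ray le_at). Qed.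

Lemma ray_mono p s t : xa p <= s -> s <= t -> preceq (ray p s) (ray p t).
Proof.
move=> le_as le_st; have le_at := le_trans le_as le_st.
split=> [|r]; rewrite !ray_xa // => lt_tr.
by rewrite !xf_ray //; apply: le_lt_trans lt_tr.
Qed.

Lemma rho_ray p s t : xa p <= s -> xa p <= t -> rho (ray p s) (ray p t) = `|s - t|.
Proof.
move=> le_as le_at; rewrite rho_comparable ?ray_xa //.
by case: (lerP s t) => h; [left | right]; apply: ray_mono => //; apply: ltW.
Qed.

Lemma ray_eq y z h : xa y <= h -> xa z <= h ->
  (forall s, h < s -> xf y s = xf z s) -> ray y h = ray z h.
Proof.
move=> le_yh le_zh eq_yz; apply: point_eq => [|s]; first by rewrite !ray_xa.
case: (lerP s h) => hs; last by rewrite !xf_ray // eq_yz.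
by rewrite !xf_below ?ray_xa.
Qed.

(** The supremum of p and q is the ray from p at the infimum of the heights
    beyond which f_p and f_q agree. *)
Lemma exists_sup p q : exists s, is_sup p q s.
Proof.
pose m := Num.max (xa p) (xa q).
have [le_pm le_qm] : xa p <= m /\ xa q <= m by rewrite !le_max !lexx orbT.
pose S t := m <= t /\ forall s, t < s -> xf p s = xf q s.
have [bp [le_bp bp0]] := xf_eventually0 p; have [bq [le_bq bq0]] := xf_eventually0 q.
have := xa_gt0 p; have := xa_gt0 q => q0 p0.
have S0 : S (bp + bq + m) by split=> [|s hs]; [lra | rewrite bp0 ?bq0 //; lra].
have lbS : has_lbound S by exists m => t [].
have le_mc : m <= inf S by apply: lb_le_inf => [|t []]; first by exists (bp + bq + m).
set c := inf S in le_mc.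
have agree s : c < s -> xf p s = xf q s.
  by move=> /(inf_lt (ex_intro _ _ S0)) [t [_ ht] lt_ts]; apply: ht.
have le_pc : xa p <= c by apply: le_trans le_mc.
exists (ray p c); split; first exact: preceq_ray.
split.
  split=> [|s]; rewrite ray_xa //; first exact: le_trans le_mc.
  by move=> lt_cs; rewrite xf_ray // agree.
move=> u [le_pu eq_pu] [le_qu eq_qu].
have le_cu : c <= xa u.
  apply: ge_inf => //; split; first by rewrite ge_max le_pu.
  by move=> s hs; rewrite eq_pu // eq_qu.
split=> [|s lt_us]; first by rewrite ray_xa.
by rewrite xf_ray ?eq_pu //; apply: le_lt_trans lt_us.
Qed.

Lemma join_is_sup p q : is_sup p q (join p q).
Proof. exact: epsilon_spec (exists_sup p q). Qed.

Lemma common_upper_bound_rho p q : exists w,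
  [/\ preceq p w, preceq q w, xa w - xa p <= rho p q & xa w - xa q <= rho p q].
Proof.
have norm_ge (r : R) : r <= `|r| /\ - r <= `|r|.
  by split; [exact: ler_norm | rewrite -normrN; exact: ler_norm].
have [n1 n2] := norm_ge (xa p - xa q).
have [[le_pq|le_qp]|incomp] := pselect (Defs.comparable p q).
- have [le _] := le_pq; exists q; rewrite rho_comparable; last by left.
  by split; [exact: le_pq | exact: preceq_refl | lra | lra].
- have [le _] := le_qp; exists p; rewrite rho_comparable; last by right.
  by split; [exact: preceq_refl | exact: le_qp | lra | lra].
have [le_pj [le_qj _]] := join_is_sup p q.
exists (join p q); split => //; rewrite /rho asboolF // /rho_cmp.
all: have [n3 n4] := norm_ge (xa p - xa (join p q)).
all: have [n5 n6] := norm_ge (xa (join p q) - xa q).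
all: case: le_pj => le_p _; case: le_qj => le_q _; lra.
Qed.

Section LipschitzPath.
Variables (g : R -> point) (lo hi : R).
Hypothesis g_lip : forall s t, lo <= s <= hi -> lo <= t <= hi -> rho (g s) (g t) <= `|s - t|.

Lemma lipschitz_path_crossing (U V : point -> Prop) tu tv :
  rho_open U -> rho_open V -> (forall t, lo <= t <= hi -> U (g t) \/ V (g t)) ->
  lo <= tu -> tv <= hi -> tu <= tv -> U (g tu) -> V (g tv) ->
  exists2 t, lo <= t <= hi & U (g t) /\ V (g t).
Proof.
move=> oU oV cover lo_tu tv_hi le_uv Utu Vtv.
have in_range t : tu <= t <= tv -> lo <= t <= hi.
  by move=> /andP[t1 t2]; apply/andP; split; lra.
pose S t := tu <= t <= tv /\ U (g t).
have tuS : S tu by split; rewrite ?lexx ?le_uv.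
have supS : has_sup S by split; [exists tu | exists tv => t [/andP[]]].
have ubS := sup_upper_bound supS.
set T := sup S in ubS.
have le_uT : tu <= T by apply: ubS.
have le_Tv : T <= tv by apply: ge_sup => [|t [/andP[]]]; first by exists tu.
have T_range : lo <= T <= hi by apply: in_range; rewrite le_uT.
case: (cover T T_range) => [UT | VT].
  have [e [e0 Ue]] := oU _ UT.
  have U_above t : tu <= t <= tv -> T <= t -> t < T + e -> U (g t).
    move=> ht le_Tt lt_t; apply: Ue.
    by rewrite (le_lt_trans (g_lip T_range (in_range _ ht))) // ler0_norm; lra.
  have Utv : U (g tv).
    case: (lerP (T + e / 2) tv) => [le_e | lt_e]; last first.
      by apply: U_above; rewrite ?le_uv ?lexx //; lra.
    have /ubS : S (T + e / 2).
      have ht : tu <= T + e / 2 <= tv by apply/andP; split; lra.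
      by split => //; apply: U_above => //; lra.
    lra.
  by exists tv; [apply: in_range; rewrite le_uv lexx | split].
have [e [e0 Ve]] := oV _ VT.
have [s [/andP[s1 s2] Us] lt_s] := sup_adherent e0 supS.
have le_sT : s <= T by apply: ubS; split => //; apply/andP.
exists s; first by apply: in_range; rewrite s1 s2.
split => //; apply: Ve; rewrite -/T in lt_s.
by rewrite (le_lt_trans (g_lip T_range _)) ?in_range ?s1 ?s2 // ger0_norm; lra.
Qed.

Lemma rho_connected_lipschitz_path :
  rho_connected (fun p => exists2 t, lo <= t <= hi & p = g t).
Proof.
move=> U V oU oV cover [_ [[tu /andP[u1 u2] ->] Utu]] [_ [[tv /andP[v1 v2] ->] Vtv]].
have coverUV t : lo <= t <= hi -> U (g t) \/ V (g t) by move=> ht; apply: cover; exists t.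
have coverVU t : lo <= t <= hi -> V (g t) \/ U (g t) by move=> /coverUV [];[right|left].
have [t ht [Ut Vt]] : exists2 t, lo <= t <= hi & U (g t) /\ V (g t).
  case: (lerP tu tv) => h; first exact: (lipschitz_path_crossing oU oV coverUV u1 v2 h Utu Vtv).
  by have [t ? []] := lipschitz_path_crossing oV oU coverVU v1 u2 (ltW h) Vtv Utu; exists t.
by exists (g t); split => //; exists t.
Qed.

End LipschitzPath.

Lemma rho_connected_union (A B : point -> Prop) :
  rho_connected A -> rho_connected B -> (exists w, A w /\ B w) ->
  rho_connected (fun p => A p \/ B p).
Proof.
move=> cA cB [w [Aw Bw]] U V oU oV cover [pu [ABu Uu]] [pv [ABv Vv]].
have crossA := cA U V oU oV (fun p Ap => cover p (or_introl Ap)).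
have crossB := cB U V oU oV (fun p Bp => cover p (or_intror Bp)).
have inA (r : point) : A r /\ U r /\ V r -> exists r, (A r \/ B r) /\ U r /\ V r.
  by move=> [? ?]; exists r; split => //; left.
have inB (r : point) : B r /\ U r /\ V r -> exists r, (A r \/ B r) /\ U r /\ V r.
  by move=> [? ?]; exists r; split => //; right.
case: (cover w (or_introl Aw)) => [Uw | Vw].
  case: ABv => [Av | Bv].
    by have [r ?] := crossA (ex_intro _ w (conj Aw Uw)) (ex_intro _ pv (conj Av Vv)); apply: (inA r).
  by have [r ?] := crossB (ex_intro _ w (conj Bw Uw)) (ex_intro _ pv (conj Bv Vv)); apply: (inB r).
case: ABu => [Au | Bu].
  by have [r ?] := crossA (ex_intro _ pu (conj Au Uu)) (ex_intro _ w (conj Aw Vw)); apply: (inA r).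
by have [r ?] := crossB (ex_intro _ pu (conj Bu Uu)) (ex_intro _ w (conj Bw Vw)); apply: (inB r).
Qed.

Lemma rho_connected_ray y h :
  rho_connected (fun p => exists2 t, xa y <= t <= h & p = ray y t).
Proof.
apply: rho_connected_lipschitz_path => s t /andP[ys _] /andP[yt _].
by rewrite rho_ray.
Qed.

Section Branches.
Variable x : point.

Definition branch y : option G :=
  if `[< preceq y x >] then Some (xf y (xa x)) else None.

Lemma branch_below y : preceq y x -> branch y = Some (xf y (xa x)).
Proof. by move=> h; rewrite /branch asboolT. Qed.

Lemma branch_not_below y : ~ preceq y x -> branch y = None.
Proof. by move=> h; rewrite /branch asboolF. Qed.

Lemma preceq_nbhd p : preceq p x -> p <> x -> exists2 e, 0 < e &
  forall q, rho p q < e -> [/\ preceq q x, q <> x & xf q (xa x) = xf p (xa x)].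
Proof.
move=> [le_px eq_px] /(@preceq_xa_lt p x (conj le_px eq_px)) lt_px.
exists (xa x - xa p) => [|q]; first lra.
move=> near; have [w [[le_pw eq_pw] [le_qw eq_qw] d_p _]] := common_upper_bound_rho p q.
have lt_wx : xa w < xa x by lra.
split.
- split=> [|t lt_xt]; first lra.
  by rewrite eq_qw -?eq_pw ?eq_px //; lra.
- by move=> eq_qx; move: le_qw; rewrite eq_qx leNgt lt_wx.
- by rewrite eq_qw ?eq_pw.
Qed.

Lemma not_preceq_nbhd p : ~ preceq p x -> exists2 e, 0 < e &
  forall q, rho p q < e -> ~ preceq q x.
Proof.
move=> npx; case: (lerP (xa p) (xa x)) => [le_px | lt_xp]; last first.
  exists (xa p - xa x) => [|q]; first lra.
  move=> near [le_qx _]; have [w [[le_pw _] _ _ d_q]] := common_upper_bound_rho p q.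
  lra.
(* A common upper bound w of p and a nearby q lies below t0, so q <= x would
   give f_p t0 = f_w t0 = f_q t0 = f_x t0. *)
have [t0 /not_implyP [lt_xt neq_t]] : exists t0, ~ (xa x < t0 -> xf p t0 = xf x t0).
  by apply: not_all_ex_not => agree; apply: npx.
exists (t0 - xa p) => [|q]; first lra.
move=> near [_ eq_qx]; have [w [[_ eq_pw] [_ eq_qw] d_p _]] := common_upper_bound_rho p q.
by apply: neq_t; rewrite eq_pw -?eq_qw ?eq_qx //; lra.
Qed.

Lemma branch_open o : rho_open (fun p => p <> x /\ branch p = o).
Proof.
move=> p [neq_px <-].
have [le_px | nle_px] := pselect (preceq p x).
  have [e e0 near] := preceq_nbhd le_px neq_px.
  exists e; split => // q /near [le_qx neq_qx eq_q].
  by rewrite !branch_below // eq_q.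
have [e e0 near] := not_preceq_nbhd nle_px.
exists e; split => // q /near nle_qx; split; last by rewrite !branch_not_below.
by move=> eq_qx; apply: nle_qx; rewrite eq_qx; apply: preceq_refl.
Qed.

Lemma branch_eq_of_same_component y z :
  same_component_minus x y z -> branch y = branch z.
Proof.
move=> [A [cA [avoid [Ay Az]]]]; apply: contrapT => neq.
pose o := branch y.
have oV : rho_open (fun p => p <> x /\ branch p <> o).
  move=> p [neq_px neq_o]; have [e [e0 near]] := branch_open (conj neq_px erefl).
  by exists e; split => // q /near [? ->].
have cover w : A w -> (w <> x /\ branch w = o) \/ (w <> x /\ branch w <> o).
  by move=> /avoid w_x; have [|] := pselect (branch w = o); [left | right].
have [p [_ [[_ eq_o] [_ neq_o]]]] := cA _ _ (@branch_open o) oV cover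
  (ex_intro _ y (conj Ay (conj (avoid _ Ay) erefl)))
  (ex_intro _ z (conj Az (conj (avoid _ Az) (nesym neq)))).
exact: neq_o eq_o.
Qed.

Lemma same_component_of_rays y z h : xa y <= h -> xa z <= h -> ray y h = ray z h ->
  (forall t, xa y <= t <= h -> ray y t <> x) ->
  (forall t, xa z <= t <= h -> ray z t <> x) -> same_component_minus x y z.
Proof.
move=> le_yh le_zh meet avoid_y avoid_z.
exists (fun p => (exists2 t, xa y <= t <= h & p = ray y t) \/
                 (exists2 t, xa z <= t <= h & p = ray z t)).
split.
  apply: rho_connected_union; try exact: rho_connected_ray.
  by exists (ray y h); split; [exists h | exists h; rewrite ?meet]; rewrite ?le_yh ?le_zh ?lexx.
split; first by move=> w [[t ? ->] | [t ? ->]]; [apply: avoid_y | apply: avoid_z].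
by split; [left; exists (xa y) | right; exists (xa z)]; rewrite ?ray_self ?lexx ?le_yh ?le_zh.
Qed.

Lemma same_component_below y z : preceq y x -> preceq z x -> y <> x -> z <> x ->
  xf y (xa x) = xf z (xa x) -> same_component_minus x y z.
Proof.
move=> le_yx le_zx neq_yx neq_zx eq_yz.
have lt_yx := preceq_xa_lt le_yx neq_yx; have lt_zx := preceq_xa_lt le_zx neq_zx.
have [e1 [e1_0 [lt_e1 pw_y]]] := xf_pw_const lt_yx.
have [e2 [e2_0 [lt_e2 pw_z]]] := xf_pw_const lt_zx.
have [e e0 [le_e1 le_e2]] := exists_pos_le2 e1_0 e2_0.
(* f_y and f_z are constant on [a_x - e, a_x], where they take the same value. *)
have below_x (y' : point) t : xa y' <= t <= xa x - e -> ray y' t <> x.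
  by move=> /andP[t1 t2] eq_x; have := ray_xa t1; rewrite eq_x; lra.
apply: (@same_component_of_rays y z (xa x - e)); [lra | lra | | exact: below_x ..].
apply: ray_eq => [||s lt_s]; [lra | lra |].
case: (lerP s (xa x)) => le_sx.
  by rewrite pw_y ?pw_z ?eq_yz //; apply/andP; split; lra.
by case: le_yx le_zx => _ eq_y [_ eq_z]; rewrite eq_y ?eq_z.
Qed.

Lemma same_component_not_below y z : ~ preceq y x -> ~ preceq z x ->
  same_component_minus x y z.
Proof.
move=> nle_yx nle_zx.
have [by_ [le_y y0]] := xf_eventually0 y; have [bz [le_z z0]] := xf_eventually0 z.
have := xa_gt0 y; have := xa_gt0 z => ay az.
have above (y' : point) : ~ preceq y' x -> forall t, xa y' <= t <= by_ + bz -> ray y' t <> x.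
  by move=> nle t /andP[t1 _] eq_x; apply: nle; rewrite -eq_x; apply: preceq_ray.
apply: (@same_component_of_rays y z (by_ + bz)); [lra | lra | | exact: above ..].
by apply: ray_eq => [||s lt_s]; [lra | lra | rewrite y0 ?z0 //; lra].
Qed.

Lemma same_component_of_branch_eq y z : y <> x -> z <> x ->
  branch y = branch z -> same_component_minus x y z.
Proof.
move=> neq_yx neq_zx.
have [le_yx | nle_yx] := pselect (preceq y x); have [le_zx | nle_zx] := pselect (preceq z x).
- by rewrite !branch_below // => -[]; apply: same_component_below.
- by rewrite branch_below // branch_not_below.
- by rewrite branch_not_below // branch_below.
- by move=> _; apply: same_component_not_below.
Qed.

Definition graft_f (g : G) s : G :=
  if xa x < s then xf x s else if xa x / 2 < s then g else 0.

Lemma graft_wf g : wf (Pt (xa x / 2) (graft_f g)).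
Proof.
have a0 := xa_gt0 x; rewrite /graft_f.
split => /=; first lra.
split; first by move=> t ht; rewrite !ifF //; apply/negbTE; rewrite -leNgt; lra.
split; last first.
  have [b [le_b b0]] := xf_eventually0 x.
  by exists b; split => [|t lt_bt]; [lra | rewrite ifT ?b0 //; lra].
move=> s lt_s; case: (lerP s (xa x)) => le_sx.
  exists ((s - xa x / 2) / 2); split; first lra; split; first lra.
  move=> t /andP[t1 t2].
  have -> : (xa x < t) = false by apply/negbTE; rewrite -leNgt; lra.
  by rewrite lt_s ifT //; lra.
have [eps [eps0 [_ pw]]] := xf_pw_const le_sx.
have [c c0 [le_ce le_cd]] := @exists_pos_le2 _ eps ((s - xa x) / 2) eps0 (ltac:(lra)).
exists c; split => //; split; first lra.
by move=> t /andP[t1 t2]; rewrite !ifT ?pw //; [apply/andP; split | ..]; lra.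
Qed.

Definition graft g : point := exist _ _ (graft_wf g).

Lemma graft_xa g : xa (graft g) = xa x / 2. Proof. by []. Qed.

Lemma xf_graft g : xf (graft g) = graft_f g. Proof. by []. Qed.

Lemma branch_surj o : exists2 y, y <> x & branch y = o.
Proof.
have a0 := xa_gt0 x; case: o => [g|].
  have le_gx : preceq (graft g) x.
    by split=> [|t lt_xt]; rewrite ?graft_xa ?xf_graft /graft_f ?lt_xt //; lra.
  exists (graft g); first by move=> /(congr1 (@xa _ _)); rewrite graft_xa; lra.
  by rewrite branch_below // xf_graft /graft_f ltxx ifT //; lra.
have le_x1 : xa x <= xa x + 1 by lra.
exists (ray x (xa x + 1)).
  by move=> /(congr1 (@xa _ _)); rewrite ray_xa //; lra.
by rewrite branch_not_below // => -[]; rewrite ray_xa //; lra.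
Qed.

End Branches.
End RTree.

Theorem lemma6 (R : realType) (G : zmodType) (x : X R G) :
  exists lbl : {y : X R G | y <> x} -> option G,
    (forall o : option G, exists y, lbl y = o) /\
    (forall y z : {y : X R G | y <> x},
        lbl y = lbl z <-> same_component_minus x (proj1_sig y) (proj1_sig z)).
Proof.
exists (fun y => branch x (proj1_sig y)); split.
  by move=> o; have [y neq_yx <-] := branch_surj x o; exists (exist _ y neq_yx).
move=> [y neq_yx] [z neq_zx] /=; split.
  exact: same_component_of_branch_eq.
exact: branch_eq_of_same_component.
Qed.
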